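(* Let $\operatorname{T}_2=\{x_1,x_2\}$ be the trivial quandle with two elements. Then $\operatorname{Aut}(\mathbb{Z}[\operatorname{T}_2])\cong\mathbb{Z}\rtimes\mathbb{Z}_2$.
   Context: A trivial quandle is a set $\operatorname{T}$ with operation $xy=x$ for all $x,y$. The quandle ring $\mathbb{Z}[\operatorname{T}]$ is the free abelian group with basis $\operatorname{T}$, with multiplication $\big(\sum_i\alpha_i x_i\big)\big(\sum_j\beta_j x_j\big)=\sum_{i,j}\alpha_i\beta_j (x_ix_j)$. $\operatorname{Aut}(\mathbb{Z}[\operatorname{T}])$ denotes the group of ring automorphisms of $\mathbb{Z}[\operatorname{T}]$ (bijective additive maps preserving the multiplication). *)

From HB Require Import structures.
From mathcomp Require Import all_boot all_order all_algebra.
Set Implicit Arguments. Unset Strict Implicit. Unset Printing Implicit Defensive.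
Import GRing.Theory.
Local Open Scope ring_scope.

Definition trivial_op (T : Type) (x y : T) : T := x.

(* The quandle ring Z[T]: free abelian group on basis T, i.e. finitely
   supported (here: T finite) integer-valued functions on T. *)
Definition qring (T : finType) := {ffun T -> int}.

(* Multiplication: (sum_i a_i x_i)(sum_j b_j x_j) = sum_{i,j} a_i b_j (x_i x_j). *)
Definition qmul (T : finType) (op : T -> T -> T) (u v : qring T) : qring T :=
  [ffun z => \sum_(i : T) \sum_(j : T | op i j == z) u i * v j].

Definition is_ring_aut (T : finType) (op : T -> T -> T)
  (f : qring T -> qring T) : Prop :=
  [/\ bijective f,
      (forall u v, f (u + v) = f u + f v)
    & (forall u v, f (qmul op u v) = qmul op (f u) (f v))].

Definition T2 := 'I_2.

(* The semidirect product Z ⋊ Z_2, Z_2 = (bool, xor) acting on Z by negation: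
   (a, s) * (b, t) = (a + (-1)^s b, s + t). *)
Definition sdmul (p q : int * bool) : int * bool :=
  (p.1 + (if p.2 then - q.1 else q.1), addb p.2 q.2).

From HB Require Import structures.
From mathcomp Require Import all_boot all_order all_algebra ring.
From Stdlib Require Import FunctionalExtensionality.
Set Implicit Arguments. Unset Strict Implicit. Unset Printing Implicit Defensive.
Import GRing.Theory.
Local Open Scope ring_scope.

(* In Z[T] with T trivial, u v = eps(v) u, where eps is the augmentation
   (sum of coefficients), so an additive bijection is a ring automorphism
   iff it preserves eps.  For T = T_2, in the basis (x1, x2 - x1) such a map
   sends x1 to x1 + k (x2 - x1) and x2 - x1 to c (x2 - x1), where c = +-1
   because the map is invertible; composing two such maps composes the pairs
   (k, c) by the semidirect product law of Z x| Z_2. *)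

Lemma morph_add_mulrz (U V : zmodType) (f : U -> V) :
  {morph f : x y / x + y} -> forall n, {morph f : x / x *~ n}.
Proof.
move=> fD n x.
have f_zmod : zmod_morphism f.
  by move=> u v; apply: (addIr (f v)); rewrite -fD !subrK.
pose F : {additive U -> V} := HB.pack f (GRing.isZmodMorphism.Build U V f f_zmod).
exact: (raddfMz F).
Qed.

Lemma int_mul_eq1_sign (c k : int) : c * k = 1 -> c = (-1) ^+ (c == -1).
Proof. by rewrite mulrC => /intUnitRing.unitzPl /orP[] /eqP ->. Qed.

Definition augment (T : finType) (u : qring T) : int := \sum_i u i.

Lemma augmentD {T : finType} (u v : qring T) : augment (u + v) = augment u + augment v.
Proof. by rewrite /augment -big_split; apply: eq_bigr => i _; rewrite ffunE. Qed.

Lemma qmul_trivial (T : finType) (u v : qring T) : qmul (@trivial_op T) u v = u *~ augment v.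
Proof.
apply/ffunP => z; rewrite !ffunE ffunMzE mulrzz /augment mulr_sumr.
rewrite (bigD1 z) //= [X in _ + X]big1 => [|i /negbTE zi]; last by rewrite /trivial_op zi big_pred0_eq.
by rewrite /trivial_op eqxx addr0.
Qed.

Lemma augment_ring_aut (T : finType) (f : qring T -> qring T) :
  is_ring_aut (@trivial_op T) f -> forall v, augment (f v) = augment v.
Proof.
case=> [[g gK fK] fD fM] v.
case: (pickP T) => [x _ | T0]; last by rewrite /augment !big_pred0.
pose ex : qring T := [ffun y => (y == x)%:Z].
have := congr1 (fun w : qring T => w x) (fM (g ex) v).
by rewrite /= !qmul_trivial (morph_add_mulrz fD) fK /ex !ffunMzE !ffunE eqxx !mulrzz !mul1r => ->.
Qed.

Local Notation x1 := (ord0 : T2).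
Local Notation x2 := (ord_max : T2).

Definition e1 : qring T2 := [ffun z => (z == x1)%:Z].
Definition d21 : qring T2 := [ffun z => (z == x2)%:Z - (z == x1)%:Z].

Lemma T2P (z : T2) : z = x1 \/ z = x2.
Proof. by case: z => -[|[|//]] lt_z2; [left | right]; apply: val_inj. Qed.

Lemma augment2 (u : qring T2) : augment u = u x1 + u x2.
Proof.
rewrite /augment big_ord_recl big_ord1; congr (_ + u _); exact: val_inj.
Qed.

Lemma qring2P (u v : qring T2) : augment u = augment v -> u x2 = v x2 -> u = v.
Proof.
rewrite !augment2 => uv12 u2; move: uv12; rewrite u2 => /addIr u1.
by apply/ffunP => z; case: (T2P z) => ->.
Qed.

Lemma augment_e1 : augment e1 = 1.
Proof. by rewrite augment2 !ffunE. Qed.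

Lemma augment_d21 : augment d21 = 0.
Proof. by rewrite augment2 !ffunE. Qed.

(* Writing u = eps(u) x1 + u(x2) (x2 - x1), the pair (k, s) acts by
   x1 |-> x1 + k (x2 - x1) and x2 - x1 |-> (-1)^s (x2 - x1). *)
Definition aut2 (p : int * bool) (u : qring T2) : qring T2 :=
  e1 *~ augment u + d21 *~ (p.1 * augment u + (-1) ^+ p.2 * u x2).

Lemma augment_aut2 p u : augment (aut2 p u) = augment u.
Proof.
by rewrite augmentD !(morph_add_mulrz augmentD) augment_e1 augment_d21 mul0rz addr0 intz.
Qed.

Lemma aut2_x2 p u : aut2 p u x2 = p.1 * augment u + (-1) ^+ p.2 * u x2.
Proof. by rewrite !ffunE !ffunMzE !ffunE /= mul0rz add0r subr0 intz. Qed.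

Lemma aut2_id u : aut2 (0, false) u = u.
Proof.
by apply: qring2P; [exact: augment_aut2 | rewrite aut2_x2 mul0r add0r mul1r].
Qed.

Lemma aut2_comp p q : aut2 p \o aut2 q = aut2 (sdmul p q).
Proof.
apply: functional_extensionality => u; apply: qring2P => /=.
  by rewrite !augment_aut2.
by rewrite !aut2_x2 augment_aut2; case: p q => [k [|]] [l [|]] /=; ring.
Qed.

Lemma aut2_morphD p : {morph aut2 p : u v / u + v}.
Proof.
move=> u v; apply: qring2P; first by rewrite [RHS]augmentD !augment_aut2 augmentD.
by rewrite [RHS]ffunE !aut2_x2 augmentD ffunE; ring.
Qed.

Definition sdinv (p : int * bool) : int * bool := (- ((-1) ^+ p.2 * p.1), p.2).

Lemma aut2_bij p : bijective (aut2 p).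
Proof.
have aut2_cancel q r : sdmul q r = (0, false) -> cancel (aut2 r) (aut2 q).
  by move=> qr u; rewrite -[aut2 q _]/((aut2 q \o aut2 r) u) aut2_comp qr aut2_id.
by exists (aut2 (sdinv p)); apply: aut2_cancel; case: p => k [];
  rewrite /sdmul /=; congr pair; ring.
Qed.

Lemma aut2_ring_aut p : is_ring_aut (@trivial_op T2) (aut2 p).
Proof.
split; [exact: aut2_bij | exact: aut2_morphD |] => u v.
by rewrite !qmul_trivial augment_aut2 (morph_add_mulrz (aut2_morphD p)).
Qed.

Definition aut2_param (f : qring T2 -> qring T2) : int * bool :=
  (f e1 x2, f d21 x2 == -1).

Lemma aut2K : cancel aut2 aut2_param.
Proof.
case=> k s; rewrite /aut2_param !aut2_x2 augment_e1 augment_d21 !ffunE /=.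
by rewrite mulr1 !mulr0 addr0 add0r subr0 mulr1; case: s.
Qed.

Lemma ring_aut2_eq f : is_ring_aut (@trivial_op T2) f -> f = aut2 (aut2_param f).
Proof.
move=> f_aut; have f_aug := augment_ring_aut f_aut.
case: f_aut => [[g _ fK] fD _].
have f_x2 u : f u x2 = f e1 x2 * augment u + f d21 x2 * u x2.
  by rewrite -{1}(aut2_id u) fD !(morph_add_mulrz fD) ffunE !ffunMzE !mulrzz /=; ring.
have f_d21_sign : f d21 x2 = (-1) ^+ (f d21 x2 == -1).
  apply: (@int_mul_eq1_sign _ (g d21 x2)).
  by have := f_x2 (g d21); rewrite -f_aug fK augment_d21 mulr0 add0r !ffunE.
apply: functional_extensionality => u; apply: qring2P.
  by rewrite f_aug augment_aut2.
by rewrite f_x2 aut2_x2 -f_d21_sign.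
Qed.

Theorem theorem6p1 :
  exists phi : (qring T2 -> qring T2) -> int * bool,
    [/\ (forall f g, is_ring_aut (@trivial_op T2) f ->
                     is_ring_aut (@trivial_op T2) g ->
                     phi (f \o g) = sdmul (phi f) (phi g)),
        (forall f g, is_ring_aut (@trivial_op T2) f ->
                     is_ring_aut (@trivial_op T2) g ->
                     phi f = phi g -> f = g)
      & (forall p, exists2 f, is_ring_aut (@trivial_op T2) f & phi f = p)].
Proof.
exists aut2_param; split.
- move=> f g /ring_aut2_eq fE /ring_aut2_eq gE.
  by rewrite fE gE aut2_comp !aut2K.
- by move=> f g /ring_aut2_eq fE /ring_aut2_eq gE fg; rewrite fE gE fg.
- by move=> p; exists (aut2 p); [exact: aut2_ring_aut | exact: aut2K].
Qed.
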